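(* Let $\mathbb{F}$ be an algebraically closed field with $\mathrm{char}\,\mathbb{F}=2$. Let $\underline{a}=(a_1,0,\ldots,0)\in\mathbb{M}^n$ with $a_1\in\{1_{\mathbf{O}},e_1\}$, and let $\underline{b}\in\mathbb{M}^n$ be such that $\dim\mathrm{alg}(\underline{b})\le1$ and $f(\underline{a})=f(\underline{b})$ for all $f\in S_n^{(2)}$. Then ${\rm G}_2\underline{a}={\rm G}_2\underline{b}$.
   Context: The split octonion algebra $\mathbf{O}$ is the 8-dimensional $\mathbb{F}$-vector space of formal matrices $a=\begin{pmatrix}\alpha&\mathbf{u}\\ \mathbf{v}&\beta\end{pmatrix}$ with $\alpha,\beta\in\mathbb{F}$, $\mathbf{u},\mathbf{v}\in\mathbb{F}^3$, with multiplication $\begin{pmatrix}\alpha&\mathbf{u}\\ \mathbf{v}&\beta\end{pmatrix}\begin{pmatrix}\alpha'&\mathbf{u}'\\ \mathbf{v}'&\beta'\end{pmatrix}=\begin{pmatrix}\alpha\alpha'+\mathbf{u}\cdot\mathbf{v}'&\alpha\mathbf{u}'+\beta'\mathbf{u}-\mathbf{v}\times\mathbf{v}'\\ \alpha'\mathbf{v}+\beta\mathbf{v}'+\mathbf{u}\times\mathbf{u}'&\beta\beta'+\mathbf{v}\cdot\mathbf{u}'\end{pmatrix}$ (dot product and cross product on $\mathbb{F}^3$). Trace $\mathrm{tr}(a)=\alpha+\beta$, norm $n(a)=\alpha\beta-\mathbf{u}\cdot\mathbf{v}$. $e_1$ has $\alpha=1$ and all else $0$, $e_2$ has $\beta=1$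 and all else $0$, $1_{\mathbf{O}}=e_1+e_2$. $\mathbb{M}=\left\{\begin{pmatrix}\alpha&(\gamma,0,0)\\(\delta,0,0)&\beta\end{pmatrix}\right\}\subseteq\mathbf{O}$ is the quaternion subalgebra. ${\rm G}_2=\mathrm{Aut}(\mathbf{O})$ acts diagonally on $\mathbf{O}^n$. For $\underline{b}\in\mathbf{O}^n$, $\mathrm{alg}(\underline{b})$ is the (non-unital) $\mathbb{F}$-subalgebra of $\mathbf{O}$ generated by $b_1,\ldots,b_n$. $S_n^{(2)}$ is the set of functions on $\mathbf{O}^n$: $\underline{a}\mapsto n(a_i)$, $\underline{a}\mapsto\mathrm{tr}(a_i)$ ($1\le i\le n$), and $\underline{a}\mapsto\mathrm{tr}(a_ia_j)$ ($1\le i<j\le n$). *)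

(* Split octonions over a field F, following the paper's
   Zorn vector-matrix model. *)
From HB Require Import structures.
From mathcomp Require Import all_boot all_order all_algebra all_field.
Set Implicit Arguments. Unset Strict Implicit. Unset Printing Implicit Defensive.
Import GRing.Theory.
Local Open Scope ring_scope.

Section Oct.
Variable F : fieldType.

Record v3 := V3 { x1 : F; x2 : F; x3 : F }.

Definition v3add (u w : v3) := V3 (x1 u + x1 w) (x2 u + x2 w) (x3 u + x3 w).
Definition v3scale (c : F) (u : v3) := V3 (c * x1 u) (c * x2 u) (c * x3 u).
Definition v3opp (u : v3) := V3 (- x1 u) (- x2 u) (- x3 u).
Definition v3zero := V3 0 0 0.
Definition dot (u w : v3) : F := x1 u * x1 w + x2 u * x2 w + x3 u * x3 w.
Definition cross (u w : v3) : v3 :=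
  V3 (x2 u * x3 w - x3 u * x2 w)
     (x3 u * x1 w - x1 u * x3 w)
     (x1 u * x2 w - x2 u * x1 w).

(* an octonion (alpha u ; v beta) *)
Record oct := Oct { oal : F; ou : v3; ov : v3; obe : F }.

Definition oadd (a b : oct) :=
  Oct (oal a + oal b) (v3add (ou a) (ou b)) (v3add (ov a) (ov b)) (obe a + obe b).
Definition oscale (c : F) (a : oct) :=
  Oct (c * oal a) (v3scale c (ou a)) (v3scale c (ov a)) (c * obe a).
Definition ozero := Oct 0 v3zero v3zero 0.

Definition omul (a b : oct) : oct :=
  Oct (oal a * oal b + dot (ou a) (ov b))
      (v3add (v3add (v3scale (oal a) (ou b)) (v3scale (obe b) (ou a)))
             (v3opp (cross (ov a) (ov b))))
      (v3add (v3add (v3scale (oal b) (ov a)) (v3scale (obe a) (ov b)))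
             (cross (ou a) (ou b)))
      (obe a * obe b + dot (ov a) (ou b)).

Definition otr (a : oct) : F := oal a + obe a.
Definition onorm (a : oct) : F := oal a * obe a - dot (ou a) (ov a).

Definition e1 : oct := Oct 1 v3zero v3zero 0.
Definition e2 : oct := Oct 0 v3zero v3zero 1.
Definition one_oct : oct := oadd e1 e2.

Definition inM (a : oct) : Prop :=
  x2 (ou a) = 0 /\ x3 (ou a) = 0 /\ x2 (ov a) = 0 /\ x3 (ov a) = 0.

Definition isAut (g : oct -> oct) : Prop :=
  [/\ forall a b, g (oadd a b) = oadd (g a) (g b),
      forall c a, g (oscale c a) = oscale c (g a),
      forall a b, g (omul a b) = omul (g a) (g b)
    & bijective g].

Inductive in_alg (n : nat) (b : 'I_n -> oct) : oct -> Prop :=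
  | alg_gen i : in_alg b (b i)
  | alg_zero : in_alg b ozero
  | alg_add x y : in_alg b x -> in_alg b y -> in_alg b (oadd x y)
  | alg_scale c x : in_alg b x -> in_alg b (oscale c x)
  | alg_mul x y : in_alg b x -> in_alg b y -> in_alg b (omul x y).

Definition dim_alg_le1 (n : nat) (b : 'I_n -> oct) : Prop :=
  exists c : oct, forall x, in_alg b x -> exists t : F, x = oscale t c.

Definition G2orbit (n : nat) (a : 'I_n -> oct) : ('I_n -> oct) -> Prop :=
  fun c => exists g, isAut g /\ c = (fun i => g (a i)).

Definition S2_agree (n : nat) (a b : 'I_n -> oct) : Prop :=
  (forall i, onorm (a i) = onorm (b i)) /\
  (forall i, otr (a i) = otr (b i)) /\
  (forall i j : 'I_n, (i < j)%N -> otr (omul (a i) (a j)) = otr (omul (b i) (b j))).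

End Oct.

(** Since
    [a1] has nonzero trace or norm, so does [b_1]; hence [b_1 <> 0] and
    [alg(b)] is the line [F b_1].  Every other [b_i] is then a multiple of
    [b_1] with vanishing trace and norm, hence [0].  It remains to move [a1]
    to [b_1] by an automorphism.  If [a1 = 1], then [b_1^2] is proportional
    to [b_1], and the quadratic equation [x^2 = tr(x) x - n(x) 1] forces
    [b_1] to be a scalar [mu 1] with [mu^2 = 1] and [2 mu = 2], i.e.
    [(mu - 1)^2 = 0].  If [a1 = e1], then [b_1] is an idempotent of [M] of
    trace 1, and an explicit product of one-parameter unipotent
    automorphisms and the flip [alpha <-> beta, u <-> -v] sends [e1] to it. *)
From Pilot Require Import Defs.
From mathcomp Require Import all_boot all_order all_algebra all_field.
From mathcomp Require Import ring.
From Stdlib Require Import FunctionalExtensionality.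
Set Implicit Arguments. Unset Strict Implicit. Unset Printing Implicit Defensive.
Import GRing.Theory.
Local Open Scope ring_scope.

Section SplitOctonions.
Variable F : fieldType.
Implicit Types (x y : oct F) (g h : oct F -> oct F) (s t l : F).

Ltac oct_destruct := repeat match goal with
  | x : oct F |- _ => case: x => ? [? ? ?] [? ? ?] ?
  end.

Ltac oct_ring :=
  rewrite /omul /oadd /oscale /otr /onorm /one_oct /e1 /e2 /ozero
          /v3add /v3scale /v3opp /v3zero /cross /dot /=;
  congr (Oct _ (V3 _ _ _) (V3 _ _ _) _); ring.

Lemma oscale0 x : oscale 0 x = ozero F.
Proof. by oct_destruct; oct_ring. Qed.

Lemma oscale1 x : oscale 1 x = x.
Proof. by oct_destruct; oct_ring. Qed.

Lemma oscaleA s t x : oscale s (oscale t x) = oscale (s * t) x.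
Proof. by oct_destruct; oct_ring. Qed.

Lemma otr_scale t x : otr (oscale t x) = t * otr x.
Proof. by oct_destruct; rewrite /otr /=; ring. Qed.

Lemma onorm_scale t x : onorm (oscale t x) = t ^+ 2 * onorm x.
Proof. by oct_destruct; rewrite /onorm /dot /=; ring. Qed.

Lemma otr0 : otr (ozero F) = 0.
Proof. by rewrite /otr /= addr0. Qed.

Lemma onorm0 : onorm (ozero F) = 0.
Proof. by rewrite /onorm /dot /=; ring. Qed.

Lemma otr_one : otr (one_oct F) = 1 + 1.
Proof. by rewrite /otr /= addr0 add0r. Qed.

Lemma onorm_one : onorm (one_oct F) = 1.
Proof. by rewrite /onorm /dot /=; ring. Qed.

Lemma otr_e1 : otr (e1 F) = 1.
Proof. by rewrite /otr /= addr0. Qed.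

Lemma onorm_e1 : onorm (e1 F) = 0.
Proof. by rewrite /onorm /dot /=; ring. Qed.

Lemma omul_sqr x :
  omul x x = oadd (oscale (otr x) x) (oscale (- onorm x) (one_oct F)).
Proof. by oct_destruct; oct_ring. Qed.

Lemma oscale_eq_addl s t x y :
  oscale s x = oadd (oscale t x) y -> oscale (s - t) x = y.
Proof.
oct_destruct; rewrite /oscale /oadd /v3scale /v3add /=.
case=> ha hu1 hu2 hu3 hv1 hv2 hv3 hb.
by congr (Oct _ (V3 _ _ _) (V3 _ _ _) _);
  [ring: ha | ring: hu1 | ring: hu2 | ring: hu3 | ring: hv1 | ring: hv2 | ring: hv3 | ring: hb].
Qed.

Lemma isAut_id : isAut (@id (oct F)).
Proof. by split=> //; exists id. Qed.

Lemma isAut_comp g h : isAut g -> isAut h -> isAut (g \o h).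
Proof.
case=> gD gZ gM [g' gK Kg] [hD hZ hM [h' hK Kh]]; split=> /=.
- by move=> x y; rewrite hD gD.
- by move=> c x; rewrite hZ gZ.
- by move=> x y; rewrite hM gM.
- by exists (h' \o g') => x /=; rewrite ?gK ?hK ?Kh ?Kg.
Qed.

Lemma isAut_inv g : isAut g -> exists2 g', isAut g' & cancel g g'.
Proof.
case=> gD gZ gM [g' gK Kg]; exists g' => //; split.
- by move=> x y; apply: (can_inj gK); rewrite Kg gD !Kg.
- by move=> c x; apply: (can_inj gK); rewrite Kg gZ !Kg.
- by move=> x y; apply: (can_inj gK); rewrite Kg gM !Kg.
- by exists g.
Qed.

Lemma isAut0 g : isAut g -> g (ozero F) = ozero F.
Proof. by case=> _ gZ _ _; rewrite -{1}(oscale0 (ozero F)) gZ oscale0. Qed.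

Lemma G2orbit_transport n (a b : 'I_n -> oct F) g :
  isAut g -> (forall i, b i = g (a i)) -> forall c, G2orbit a c <-> G2orbit b c.
Proof.
move=> g_aut /functional_extensionality -> c; have [g' g'_aut gK] := isAut_inv g_aut.
split=> -[h [h_aut ->]].
- exists (h \o g'); split; first exact: isAut_comp.
  by apply: functional_extensionality => i /=; rewrite gK.
- by exists (h \o g); split; first exact: isAut_comp.
Qed.

Definition oct_shear s x : oct F :=
  Oct (oal x + s * x1 (ov x))
      (V3 (x1 (ou x) + s * (obe x - oal x) - s ^+ 2 * x1 (ov x)) (x2 (ou x)) (x3 (ou x)))
      (V3 (x1 (ov x)) (x2 (ov x) + s * x3 (ou x)) (x3 (ov x) - s * x2 (ou x)))
      (obe x - s * x1 (ov x)).

Definition oct_flip x : oct F := Oct (obe x) (v3opp (ov x)) (v3opp (ou x)) (oal x).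

Lemma oct_shear_aut s : isAut (oct_shear s).
Proof.
rewrite /oct_shear; split; try by move=> *; oct_destruct; oct_ring.
by exists (oct_shear (- s)) => x; oct_destruct; rewrite /oct_shear; oct_ring.
Qed.

Lemma oct_flip_aut : isAut oct_flip.
Proof.
rewrite /oct_flip; split; try by move=> *; oct_destruct; oct_ring.
by exists oct_flip => x; oct_destruct; rewrite /oct_flip; oct_ring.
Qed.

Lemma inM_conj_e1 x : inM x -> otr x = 1 -> onorm x = 0 ->
  exists2 h, isAut h & h (e1 F) = x.
Proof.
case: x => al [g ? ?] [d ? ?] be [/= -> [-> [-> ->]]].
rewrite /otr /onorm /dot /= !mulr0 !addr0 => tr /eqP; rewrite subr_eq0 => /eqP nm.
have {tr} be_eq : be = 1 - al by rewrite -tr; ring.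
rewrite be_eq in nm *; move: (esym nm) => {nm}.
have [-> | al_neq0] := eqVneq al 0 => gd.
- exists (oct_shear g \o oct_flip \o oct_shear d).
    exact: isAut_comp (isAut_comp (oct_shear_aut g) oct_flip_aut) (oct_shear_aut d).
  rewrite /= /oct_shear /oct_flip /e1 /v3opp /v3zero /=.
  by congr (Oct _ (V3 _ _ _) (V3 _ _ _) _); ring: gd.
- exists (oct_flip \o oct_shear (- d / al) \o oct_flip \o oct_shear (- g)).
    exact: isAut_comp (isAut_comp (isAut_comp oct_flip_aut (oct_shear_aut _))
                                  oct_flip_aut) (oct_shear_aut _).
  rewrite /= /oct_shear /oct_flip /e1 /v3opp /v3zero /=.
  by congr (Oct _ (V3 _ _ _) (V3 _ _ _) _); field: gd.
Qed.

Lemma sqr_proportional_eq_one x l :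
  otr x = otr (one_oct F) -> onorm x = onorm (one_oct F) ->
  omul x x = oscale l x -> x = one_oct F.
Proof.
move=> trx nx; rewrite omul_sqr trx nx onorm_one => /esym/oscale_eq_addl.
set m := l - _ => mx.
have m_neq0 : m != 0.
  apply/eqP => m0; move: mx; rewrite m0 oscale0 => /(congr1 (@oal F)) /= /eqP.
  by rewrite addr0 mulr1 eq_sym oppr_eq0 oner_eq0.
have {mx} x_eq : x = oscale (m^-1 * -1) (one_oct F).
  by rewrite -oscaleA -mx oscaleA mulVf // oscale1.
move: trx nx; rewrite x_eq otr_scale onorm_scale otr_one onorm_one.
set mu := _ * -1 => trx nx.
have : (mu - 1) ^+ 2 = 0.
  by transitivity (mu ^+ 2 * 1 - mu * (1 + 1) + 1); [ring | rewrite nx trx; ring].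
by move/eqP; rewrite expf_eq0 subr_eq0 => /eqP ->; rewrite oscale1.
Qed.

(* Qualified because ssralg's [in_alg] shadows the one of [Defs]. *)
Lemma dim_alg_le1_line n (b : 'I_n -> oct F) y :
  dim_alg_le1 b -> Defs.in_alg b y -> y <> ozero F ->
  forall x, Defs.in_alg b x -> exists t, x = oscale t y.
Proof.
case=> c line b_y y_neq0 x bx.
have [s ys] := line y b_y; have [t ->] := line x bx.
have s_neq0 : s != 0 by apply/eqP => s0; apply: y_neq0; rewrite ys s0 oscale0.
by exists (t / s); rewrite ys oscaleA divfK.
Qed.

Lemma oct_neq0 y : otr y != 0 \/ onorm y != 0 -> y <> ozero F.
Proof. by move=> + y0; rewrite y0 otr0 onorm0 eqxx; case. Qed.

Lemma oscale_eq0_tr_norm t y : otr y != 0 \/ onorm y != 0 ->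
  otr (oscale t y) = 0 -> onorm (oscale t y) = 0 -> oscale t y = ozero F.
Proof.
rewrite otr_scale onorm_scale => y_nondeg /eqP tr0 /eqP n0.
suff -> : t = 0 by exact: oscale0.
apply/eqP; case: y_nondeg => [tr_neq0 | n_neq0].
- by move: tr0; rewrite mulf_eq0 (negPf tr_neq0) orbF.
- by move: n0; rewrite mulf_eq0 (negPf n_neq0) orbF expf_eq0 => /andP[].
Qed.

End SplitOctonions.

Theorem lemma7p6 (F : closedFieldType) (hchar : 2%N \in [pchar F])
  (n : nat) (hn : (0 < n)%N) (a1 : oct F)
  (ha1 : a1 = one_oct F \/ a1 = e1 F)
  (b : 'I_n -> oct F) (hbM : forall i, inM (b i))
  (hdim : dim_alg_le1 b)
  (hS : S2_agree (fun i : 'I_n => if val i == 0%N then a1 else ozero F) b) :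
  forall c : 'I_n -> oct F,
    G2orbit (fun i : 'I_n => if val i == 0%N then a1 else ozero F) c <-> G2orbit b c.
Proof.
case: hS => hN [hT _]; pose i0 := Ordinal hn.
have [N0 T0] : onorm (b i0) = onorm a1 /\ otr (b i0) = otr a1 by rewrite -hN -hT.
have b0_nondeg : otr (b i0) != 0 \/ onorm (b i0) != 0.
  by rewrite N0 T0; case: ha1 => ->; [right; rewrite onorm_one | left; rewrite otr_e1];
    apply: oner_neq0.
have line := dim_alg_le1_line hdim (alg_gen b i0) (oct_neq0 b0_nondeg).
have [g g_aut g_a1] : exists2 g, isAut g & g a1 = b i0.
  case: ha1 => ha1; rewrite ha1 in N0 T0 *.
  - have [l b0_sqr] := line _ (alg_mul (alg_gen b i0) (alg_gen b i0)).
    by exists id; [exact: isAut_id | rewrite (sqr_proportional_eq_one T0 N0 b0_sqr)].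
  - by apply: (inM_conj_e1 (hbM i0)); rewrite ?T0 ?N0 ?otr_e1 ?onorm_e1.
apply: (G2orbit_transport g_aut) => i /=.
have [i_0 | i_neq0] := eqVneq (val i) 0%N.
  by rewrite g_a1 (_ : i = i0) //; exact: val_inj.
have [t bi] := line _ (alg_gen b i).
move: (hN i) (hT i); rewrite (negPf i_neq0) (isAut0 g_aut) onorm0 otr0 bi => n0 tr0.
exact: oscale_eq0_tr_norm b0_nondeg (esym tr0) (esym n0).
Qed.
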